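(* For all $z\in\mathbb{C}\setminus\big((-\infty,-1]\cup[1,\infty)\big)$, $$z(1+z)\gamma(z)+z(1-z)\gamma(-z)=2z^3\gamma(z^2)-2z\log 2+(1+z)\log(1+z)-(1-z)\log(1-z).$$
   Context: $\gamma(z)$ is the generalized-Euler-constant function: for $|z|\le1$, $\gamma(z)=\sum_{n=1}^{\infty} z^{n-1}\left(\frac{1}{n}-\log\frac{n+1}{n}\right)$, and for $z\in\mathbb{C}\setminus[1,\infty)$ it denotes the analytic continuation $\gamma(z)=\int_0^1\frac{1-x+\log x}{(1-xz)\log x}\,dx$. $\log$ is the principal branch. *)

From Stdlib Require Import Reals.
From Coquelicot Require Import Coquelicot.
Open Scope R_scope.

(* Principal argument of a complex number, with values in (-PI, PI]
   (Carg 0 = 0, irrelevant). *)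
Definition Carg (z : C) : R :=
  let x := Re z in let y := Im z in
  if Rlt_dec 0 x then atan (y / x)
  else if Rlt_dec x 0 then
    (if Rle_dec 0 y then atan (y / x) + PI else atan (y / x) - PI)
  else (if Rlt_dec 0 y then PI / 2
        else if Rlt_dec y 0 then - (PI / 2) else 0).

Definition Clog (z : C) : C := (ln (Cmod z), Carg z).

(* Generalized-Euler-constant function, analytic continuation to
   C \ [1, oo):  gamma(z) = int_0^1 (1 - x + log x) / ((1 - x z) log x) dx.
   The integrand has removable singularities at x = 0 and x = 1 (it is bounded),
   so the Riemann integral of the C-valued function on [0,1] is meaningful. *)
Definition gammaE (z : C) : C :=
  @RInt C_R_CompleteNormedModule
    (fun x : R => Cmult (RtoC ((1 - x + ln x) / ln x))
                        (Cinv (Cminus (RtoC 1) (Cmult (RtoC x) z))))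
    0 1.

From Stdlib Require Import Reals Lra.
From Coquelicot Require Import Coquelicot.
Open Scope R_scope.

(* Write L x = (x - 1) / ln x for the logarithmic mean of x and 1, so that the
   integrand of gammaE w is (1 - L x) / (1 - x w).  Substitute x = y^2 in
   gammaE (z^2): since L (y^2) = L y (1 + y) / 2 and 1 - y^2 z^2 = (1 - y z)(1 + y z),
   partial fractions turn z (1 + z) gammaE z + z (1 - z) gammaE (-z) - 2 z^3 gammaE (z^2)
   into the integral over [0, 1] of
       (1 - z) z / (1 - y z) + (1 + z) z / (1 + y z) - 2 z L y.
   For w = z and w = -z the segment y |-> 1 - y w avoids the cut of the principal
   logarithm, so - Log (1 - y w) is a primitive of w / (1 - y w).  Finally the integral
   of L over [0, 1] is ln 2: the substitution x = y^2 gives that its integral over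
   [0, a] is - int_(a^2)^a dv / ln v, and 1 / ln v = - 1 / (1 - v) + O(1) makes this
   ln (1 + a) + O(1 - a) as a -> 1. *)

(** * The integral of the logarithmic mean *)

Lemma ln_le_sub1 x : 0 < x -> ln x <= x - 1.
Proof. intros Hx. generalize (exp_ineq1_le (ln x)). rewrite exp_ln by exact Hx. lra. Qed.

Lemma one_sub_inv_le_ln x : 0 < x -> 1 - / x <= ln x.
Proof.
intros Hx. generalize (ln_le_sub1 (/ x) (Rinv_0_lt_compat x Hx)).
rewrite ln_Rinv by exact Hx. lra.
Qed.

Lemma ln_lt_0 x : 0 < x < 1 -> ln x < 0.
Proof. intros Hx. rewrite <- ln_1. apply ln_increasing; lra. Qed.

Lemma ln_nonpos x : x <= 0 -> ln x = 0.
Proof. intros Hx. unfold ln. case Rlt_dec; intros; [exfalso; lra | reflexivity]. Qed.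

Lemma ln_sqrt y : 0 < y -> ln (sqrt y) = ln y / 2.
Proof.
intros Hy. rewrite <- (sqrt_sqrt y) at 2 by lra.
rewrite ln_mult by (apply sqrt_lt_R0, Hy). field.
Qed.

(* The logarithmic mean of [x] and [1], made continuous at [1]; at [0] the junk
   values [ln 0 = 0] and [/ 0 = 0] give [logmean 0 = 0], which is its limit there. *)
Definition logmean (x : R) : R := if Req_EM_T x 1 then 1 else (x - 1) / ln x.

Lemma logmean_1 : logmean 1 = 1.
Proof. unfold logmean. destruct (Req_EM_T 1 1); [reflexivity | contradiction]. Qed.

Lemma logmean_neq1 x : x <> 1 -> logmean x = (x - 1) * / ln x.
Proof. intros Hx. unfold logmean. destruct (Req_EM_T x 1); [contradiction | reflexivity]. Qed.

Lemma logmean_between x : 0 < x -> Rmin x 1 <= logmean x <= Rmax x 1.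
Proof.
intros Hx. destruct (Req_dec x 1) as [->|Hx1].
{ rewrite logmean_1, Rmin_right, Rmax_right; lra. }
rewrite logmean_neq1 by exact Hx1.
assert (Hu := ln_le_sub1 x Hx). assert (Hl := one_sub_inv_le_ln x Hx).
assert (Hl' : x * ln x >= x - 1).
{ replace (x - 1) with (x * (1 - / x)) by (field; lra). nra. }
assert (Hq : (x - 1) * / ln x * ln x = x - 1) by (field; apply ln_neq_0; lra).
destruct (Rlt_le_dec x 1) as [Hlt|Hge].
- assert (Hln := ln_lt_0 x (conj Hx Hlt)).
  rewrite Rmin_left, Rmax_right by lra. split; nra.
- assert (Hln : 0 < ln x) by (rewrite <- ln_1; apply ln_increasing; lra).
  rewrite Rmin_right, Rmax_left by lra. split; nra.
Qed.

Lemma logmean_sq x : 0 < x < 1 -> logmean (x * x) = logmean x * (1 + x) / 2.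
Proof.
intros Hx. rewrite !logmean_neq1 by nra. rewrite ln_mult by lra.
assert (ln x < 0) by (apply ln_lt_0; lra). field. lra.
Qed.

Lemma continuous_inv_ln x : 0 <= x < 1 -> continuous (fun y => / ln y) x.
Proof.
intros Hx. destruct (Req_dec x 0) as [->|Hx0].
- apply filterlim_locally. intros eps.
  assert (Heps : 0 < / eps) by apply Rinv_0_lt_compat, cond_pos.
  exists (mkposreal (exp (- / eps)) (exp_pos _)). intros y Hy.
  change (Rabs (y - 0) < exp (- / eps)) in Hy.
  change (Rabs (/ ln y - / ln 0) < eps).
  rewrite (ln_nonpos 0), Rinv_0, Rminus_0_r by lra. rewrite Rminus_0_r in Hy.
  destruct (Rle_lt_dec y 0) as [Hy0|Hy0].
  + rewrite ln_nonpos, Rinv_0, Rabs_R0 by exact Hy0. apply cond_pos.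
  + assert (Hln : ln y < - / eps).
    { rewrite <- (ln_exp (- / eps)). apply ln_increasing; [exact Hy0|].
      apply Rabs_def2 in Hy. lra. }
    rewrite Rabs_left by (apply Rinv_lt_0_compat; lra).
    rewrite <- Rinv_opp, <- (Rinv_inv eps). apply Rinv_lt_contravar; nra.
- assert (ln x < 0) by (apply ln_lt_0; lra).
  apply (@ex_derive_continuous R_AbsRing R_NormedModule). auto_derive. lra.
Qed.

Lemma continuous_logmean x : 0 <= x <= 1 -> continuous logmean x.
Proof.
intros Hx. destruct (Req_dec x 1) as [->|Hx1].
- apply filterlim_locally. intros eps.
  exists (mkposreal (Rmin eps 1) (Rmin_pos _ _ (cond_pos eps) Rlt_0_1)). intros y Hy.
  change (Rabs (y - 1) < Rmin eps 1) in Hy. change (Rabs (logmean y - logmean 1) < eps).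
  assert (Hm := Rmin_l eps 1). assert (Hm1 := Rmin_r eps 1). apply Rabs_def2 in Hy.
  assert (Hb := logmean_between y ltac:(lra)).
  rewrite logmean_1. destruct (Rle_lt_dec y 1).
  + rewrite Rmin_left, Rmax_right in Hb by lra. apply Rabs_def1; lra.
  + rewrite Rmin_right, Rmax_left in Hb by lra. apply Rabs_def1; lra.
- apply continuous_ext_loc with (fun y => (y - 1) * / ln y).
  + apply (filter_imp (fun y => y < 1)).
    * intros y Hy. symmetry. apply logmean_neq1. lra.
    * apply open_lt. lra.
  + apply (@continuous_mult R_UniformSpace R_AbsRing (fun y => y - 1) (fun y => / ln y)).
    * apply (@ex_derive_continuous R_AbsRing R_NormedModule). auto_derive. exact I.
    * apply continuous_inv_ln. lra.
Qed.

Lemma ex_RInt_logmean a b : 0 <= a <= 1 -> 0 <= b <= 1 -> ex_RInt logmean a b.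
Proof.
intros Ha Hb. apply (@ex_RInt_continuous R_CompleteNormedModule).
intros x [Hxa Hxb]. apply continuous_logmean. split.
- apply Rle_trans with (2 := Hxa). apply Rmin_glb; lra.
- apply Rle_trans with (1 := Hxb). apply Rmax_lub; lra.
Qed.

Lemma ex_RInt_inv_ln a b : 0 <= a < 1 -> 0 <= b < 1 -> ex_RInt (fun y => / ln y) a b.
Proof.
intros Ha Hb. apply (@ex_RInt_continuous R_CompleteNormedModule).
intros x [Hxa Hxb]. apply continuous_inv_ln. split.
- apply Rle_trans with (2 := Hxa). apply Rmin_glb; lra.
- apply Rle_lt_trans with (1 := Hxb). apply Rmax_lub_lt; lra.
Qed.

Lemma is_RInt_const_sub_inv_one_sub c p q : p < 1 -> q < 1 ->
  is_RInt (fun v => c - / (1 - v)) p q (c * (q - p) + ln (1 - q) - ln (1 - p)).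
Proof.
intros Hp Hq.
replace (c * (q - p) + ln (1 - q) - ln (1 - p))
  with (minus (c * q + ln (1 - q)) (c * p + ln (1 - p)))
  by (unfold minus, plus, opp; simpl; ring).
assert (Hlt : forall x, Rmin p q <= x <= Rmax p q -> x < 1).
{ intros x [_ Hx]. apply Rle_lt_trans with (1 := Hx). apply Rmax_lub_lt; lra. }
apply (@is_RInt_derive R_CompleteNormedModule (fun v => c * v + ln (1 - v))).
- intros x Hx. specialize (Hlt x Hx). auto_derive; [lra | field; lra].
- intros x Hx. specialize (Hlt x Hx).
  apply (@ex_derive_continuous R_AbsRing R_NormedModule). auto_derive. lra.
Qed.

Lemma inv_ln_bounds v : 0 < v < 1 -> - / (1 - v) <= / ln v <= 1 - / (1 - v).
Proof.
intros Hv.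
assert (Hu := ln_le_sub1 v ltac:(lra)). assert (Hl := one_sub_inv_le_ln v ltac:(lra)).
assert (Hln := ln_lt_0 v Hv).
replace (1 - / (1 - v)) with (/ (1 - / v)) by (field; lra).
replace (- / (1 - v)) with (/ (v - 1)) by (field; lra).
assert (Hneg : forall a b, b <= a < 0 -> / a <= / b).
{ intros a b Hab. assert (H := Rinv_le_contravar (- a) (- b) ltac:(lra) ltac:(lra)).
  rewrite !Rinv_opp in H. lra. }
assert (/ v > 1) by (rewrite <- Rinv_1; apply Rinv_lt_contravar; lra).
split; apply Hneg; lra.
Qed.

Lemma RInt_inv_ln_bounds a : 0 < a < 1 ->
  - ln (1 + a) <= RInt (fun v => / ln v) (a * a) a <= a - a * a - ln (1 + a).
Proof.
intros Ha.
assert (Hln : ln (1 - a) - ln (1 - a * a) = - ln (1 + a)).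
{ replace (1 - a * a) with ((1 - a) * (1 + a)) by ring. rewrite ln_mult by lra. ring. }
assert (Haa : a * a < a) by nra.
assert (HI := @RInt_correct R_CompleteNormedModule _ _ _
  (ex_RInt_inv_ln (a * a) a ltac:(nra) ltac:(lra))).
assert (Hlo := is_RInt_const_sub_inv_one_sub 0 (a * a) a ltac:(lra) ltac:(lra)).
assert (Hhi := is_RInt_const_sub_inv_one_sub 1 (a * a) a ltac:(lra) ltac:(lra)).
split.
- replace (- ln (1 + a)) with (0 * (a - a * a) + ln (1 - a) - ln (1 - a * a)) by lra.
  apply (is_RInt_le _ _ (a * a) a _ _ ltac:(lra) Hlo HI).
  intros v Hv. assert (Hb := inv_ln_bounds v ltac:(nra)). lra.
- replace (a - a * a - ln (1 + a)) with (1 * (a - a * a) + ln (1 - a) - ln (1 - a * a)) by lra.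
  apply (is_RInt_le _ _ (a * a) a _ _ ltac:(lra) HI Hhi).
  intros v Hv. apply inv_ln_bounds. nra.
Qed.

Lemma RInt_logmean_0a a : 0 < a < 1 ->
  RInt logmean 0 a = - RInt (fun v => / ln v) (a * a) a.
Proof.
intros Ha.
assert (Hsub : is_RInt (fun y => y * / ln y) 0 a (RInt (fun v => / ln v) 0 (a * a))).
{ assert (Hc := @is_RInt_comp R_CompleteNormedModule (fun v => / ln v)
    (fun y => y * y) (fun y => 2 * y) 0 a).
  cbv beta in Hc. rewrite Rmult_0_l in Hc.
  apply (@is_RInt_ext R_NormedModule) with (f := fun y => scal (2 * y) (/ ln (y * y))).
  - intros y Hy. rewrite Rmin_left, Rmax_right in Hy by lra.
    rewrite ln_mult by lra. assert (ln y < 0) by (apply ln_lt_0; lra).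
    unfold scal; simpl; unfold mult; simpl. field. lra.
  - apply Hc.
    + intros x Hx. rewrite Rmin_left, Rmax_right in Hx by lra.
      apply continuous_inv_ln. nra.
    + intros x _. split.
      * auto_derive; [exact I | ring].
      * apply (@ex_derive_continuous R_AbsRing R_NormedModule). auto_derive. exact I. }
assert (Hsplit : is_RInt logmean 0 a
   (minus (RInt (fun v => / ln v) 0 (a * a)) (RInt (fun v => / ln v) 0 a))).
{ apply (@is_RInt_ext R_NormedModule) with (f := fun y => minus (y * / ln y) (/ ln y)).
  - intros y Hy. rewrite Rmin_left, Rmax_right in Hy by lra.
    rewrite logmean_neq1 by lra. unfold minus, plus, opp; simpl. ring.
  - apply (@is_RInt_minus R_NormedModule); [exact Hsub|].
    apply (@RInt_correct R_CompleteNormedModule), ex_RInt_inv_ln; lra. }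
rewrite (is_RInt_unique _ _ _ _ Hsplit).
rewrite <- (@RInt_Chasles R_CompleteNormedModule (fun v => / ln v) 0 (a * a) a)
  by (apply ex_RInt_inv_ln; nra).
unfold minus, plus, opp; simpl. ring.
Qed.

Lemma RInt_logmean_a1 a : 0 < a < 1 -> 0 <= RInt logmean a 1 <= 1 - a.
Proof.
intros Ha.
assert (Hex := ex_RInt_logmean a 1 ltac:(lra) ltac:(lra)).
assert (Hb : forall x, a < x < 1 -> 0 <= logmean x <= 1).
{ intros x Hx. assert (H := logmean_between x ltac:(lra)).
  rewrite Rmin_left, Rmax_right in H by lra. lra. }
split.
- apply RInt_ge_0; [lra | exact Hex |]. intros x Hx. apply Hb, Hx.
- replace (1 - a) with (RInt (fun _ => 1) a 1)
    by (rewrite RInt_const; unfold scal; simpl; unfold mult; simpl; ring).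
  apply RInt_le; [lra | exact Hex | apply ex_RInt_const |]. intros x Hx. apply Hb, Hx.
Qed.

Lemma is_RInt_logmean : is_RInt logmean 0 1 (ln 2).
Proof.
replace (ln 2) with (RInt logmean 0 1).
{ apply (@RInt_correct R_CompleteNormedModule), ex_RInt_logmean; lra. }
assert (Hclose : forall a, 0 < a < 1 -> Rabs (RInt logmean 0 1 - ln 2) <= 2 * (1 - a)).
{ intros a Ha.
  rewrite <- (@RInt_Chasles R_CompleteNormedModule logmean 0 a 1) by (apply ex_RInt_logmean; lra).
  change (plus ?x ?y) with (x + y). rewrite RInt_logmean_0a by exact Ha.
  assert (HM := RInt_inv_ln_bounds a Ha). assert (HT := RInt_logmean_a1 a Ha).
  assert (Hln2 : 0 <= ln 2 - ln (1 + a) <= 1 - a).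
  { rewrite <- ln_div by lra.
    assert (H2 : 2 / (1 + a) * (1 + a) = 2) by (field; lra). split.
    - rewrite <- ln_1. apply ln_le; nra.
    - assert (Hpos : 0 < 2 / (1 + a)) by (apply Rdiv_lt_0_compat; lra).
      apply Rle_trans with (1 := ln_le_sub1 _ Hpos). nra. }
  apply Rabs_le. nra. }
destruct (Req_dec (RInt logmean 0 1) (ln 2)) as [E|Hne]; [exact E | exfalso].
set (d := Rabs (RInt logmean 0 1 - ln 2)) in Hclose.
assert (Hd : 0 < d) by (apply Rabs_pos_lt; lra).
assert (Hm := Rmax_l (1 / 2) (1 - d / 4)). assert (Hm' := Rmax_r (1 / 2) (1 - d / 4)).
assert (Hm1 : Rmax (1 / 2) (1 - d / 4) < 1) by (apply Rmax_lub_lt; lra).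
specialize (Hclose (Rmax (1 / 2) (1 - d / 4)) ltac:(lra)). lra.
Qed.

(** * Complex-valued integrals *)

Lemma continuous_C (f : R -> C) x :
  continuous (fun t => Re (f t)) x -> continuous (fun t => Im (f t)) x -> continuous f x.
Proof.
intros Hre Him. apply filterlim_locally. intros eps.
apply filterlim_locally with (eps := eps) in Hre.
apply filterlim_locally with (eps := eps) in Him.
apply (filter_imp _ _ (fun t Ht => Ht) (filter_and _ _ Hre Him)).
Qed.

Lemma is_RInt_C (f : R -> C) a b (l : C) :
  is_RInt (fun t => Re (f t)) a b (Re l) -> is_RInt (fun t => Im (f t)) a b (Im l) ->
  is_RInt f a b l.
Proof. destruct l as [l1 l2]. apply is_RInt_fct_extend_pair. Qed.

(* [is_RInt_plus] and [is_RInt_minus] restated with [Cplus] and [Cminus], which are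
   only convertible to the module operations, so that their conclusions can be rewritten. *)
Lemma is_RInt_Cplus (f g : R -> C) a b lf lg :
  is_RInt f a b lf -> is_RInt g a b lg -> is_RInt (fun x => f x + g x)%C a b (lf + lg)%C.
Proof. exact (is_RInt_plus f g a b lf lg). Qed.

Lemma is_RInt_Cminus (f g : R -> C) a b lf lg :
  is_RInt f a b lf -> is_RInt g a b lg -> is_RInt (fun x => f x - g x)%C a b (lf - lg)%C.
Proof. exact (is_RInt_minus f g a b lf lg). Qed.

Lemma is_RInt_Cmult_l (c : C) (f : R -> C) a b l :
  is_RInt f a b l -> is_RInt (fun x => c * f x)%C a b (c * l)%C.
Proof.
intros Hf. destruct c as [c1 c2].
assert (Hr := is_RInt_fct_extend_fst _ _ _ _ Hf).
assert (Hi := is_RInt_fct_extend_snd _ _ _ _ Hf).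
apply is_RInt_C.
- exact (is_RInt_minus _ _ _ _ _ _ (is_RInt_scal _ _ _ c1 _ Hr) (is_RInt_scal _ _ _ c2 _ Hi)).
- exact (is_RInt_plus _ _ _ _ _ _ (is_RInt_scal _ _ _ c1 _ Hi) (is_RInt_scal _ _ _ c2 _ Hr)).
Qed.

Lemma is_RInt_RtoC (f : R -> R) a b l :
  is_RInt f a b l -> is_RInt (fun x => RtoC (f x)) a b (RtoC l).
Proof.
intros Hf. apply is_RInt_C; [exact Hf|].
replace (Im l) with (scal (b - a) 0) by (unfold scal; simpl; unfold mult; simpl; ring).
exact (@is_RInt_const R_NormedModule a b 0).
Qed.

Lemma is_RInt_unique_ext {V : CompleteNormedModule R_AbsRing} (f g : R -> V) a b lf lg :
  is_RInt f a b lf -> is_RInt g a b lg ->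
  (forall x, Rmin a b < x < Rmax a b -> f x = g x) -> lf = lg.
Proof.
intros Hf Hg Hfg. rewrite <- (is_RInt_unique f a b lf Hf), <- (is_RInt_unique g a b lg Hg).
apply RInt_ext, Hfg.
Qed.

(** * The principal logarithm along a segment *)

Lemma Carg_Re_pos x y : 0 < x -> Carg (x, y) = atan (y / x).
Proof. intros Hx. unfold Carg; simpl. destruct (Rlt_dec 0 x); [reflexivity | contradiction]. Qed.

Lemma Carg_Im_neq0 x y : y <> 0 ->
  Carg (x, y) = (if Rlt_dec 0 y then PI / 2 else - (PI / 2)) - atan (x / y).
Proof.
intros Hy. unfold Carg; simpl. apply Rdichotomy in Hy.
destruct (Rlt_dec 0 x) as [Hx|Hx]; [|destruct (Rlt_dec x 0) as [Hx'|Hx']].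
- destruct (Rlt_dec 0 y) as [Hy'|Hy'].
  + rewrite <- (Rinv_div x y), atan_inv by (apply Rdiv_lt_0_compat; lra). lra.
  + replace (y / x) with (- / (x / - y)) by (field; lra).
    replace (x / y) with (- (x / - y)) by (field; lra).
    rewrite !atan_opp, atan_inv by (apply Rdiv_lt_0_compat; lra). lra.
- destruct (Rle_dec 0 y) as [Hy'|Hy']; destruct (Rlt_dec 0 y) as [Hy''|Hy'']; try lra.
  + replace (y / x) with (- / (- x / y)) by (field; lra).
    replace (x / y) with (- (- x / y)) by (field; lra).
    rewrite !atan_opp, atan_inv by (apply Rdiv_lt_0_compat; lra). lra.
  + replace (y / x) with (/ (- x / - y)) by (field; lra).
    replace (x / y) with (- x / - y) by (field; lra).
    rewrite atan_inv by (apply Rdiv_lt_0_compat; lra). lra.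
- replace x with 0 by lra. unfold Rdiv. rewrite Rmult_0_l, atan_0, Rminus_0_r.
  destruct (Rlt_dec 0 y); [reflexivity|]. destruct (Rlt_dec y 0); [reflexivity | lra].
Qed.

Lemma is_derive_atan_div (u v : R -> R) t du dv :
  is_derive u t du -> is_derive v t dv -> v t <> 0 ->
  is_derive (fun s => atan (u s / v s)) t ((v t * du - u t * dv) / (u t ^ 2 + v t ^ 2)).
Proof.
intros Hu Hv Hv0.
assert (H := is_derive_comp atan (fun s => u s / v s) t _ _
  (is_derive_atan _) (is_derive_div u v t du dv Hu Hv Hv0)).
change (scal ?a ?b) with (a * b) in H.
replace ((v t * du - u t * dv) / (u t ^ 2 + v t ^ 2))
  with ((du * v t - u t * dv) / v t ^ 2 * / (1 + (u t / v t)²)); [exact H|].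
assert (0 < v t ^ 2) by (apply pow2_gt_0; exact Hv0).
assert (0 <= u t ^ 2) by apply pow2_ge_0.
unfold Rsqr. field. split; [lra | exact Hv0].
Qed.

Lemma is_derive_Carg (u v : R -> R) t du dv :
  is_derive u t du -> is_derive v t dv -> 0 < u t \/ v t <> 0 ->
  is_derive (fun s => Carg (u s, v s)) t ((u t * dv - v t * du) / (u t ^ 2 + v t ^ 2)).
Proof.
intros Hu Hv Huv.
assert (Hcu := @ex_derive_continuous R_AbsRing R_NormedModule u t (ex_intro _ du Hu)).
assert (Hcv := @ex_derive_continuous R_AbsRing R_NormedModule v t (ex_intro _ dv Hv)).
destruct Huv as [Hu0|Hv0].
- apply is_derive_ext_loc with (fun s => atan (v s / u s)).
  + apply (filter_imp (fun s => 0 < u s)).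
    * intros s Hs. symmetry. apply Carg_Re_pos, Hs.
    * apply Hcu, open_gt, Hu0.
  + rewrite Rplus_comm. apply is_derive_atan_div; [exact Hv | exact Hu | lra].
- assert (Hshift : forall c, locally t (fun s => c - atan (u s / v s) = Carg (u s, v s)) ->
    is_derive (fun s => Carg (u s, v s)) t ((u t * dv - v t * du) / (u t ^ 2 + v t ^ 2))).
  { intros c Hc. apply is_derive_ext_loc with (1 := Hc).
    assert (H := is_derive_minus _ _ t _ _ (is_derive_const c t)
                   (is_derive_atan_div u v t du dv Hu Hv Hv0)).
    change (minus ?a ?b) with (a - b) in H. change (@zero R_NormedModule) with 0 in H.
    replace ((u t * dv - v t * du) / (u t ^ 2 + v t ^ 2))
      with (0 - (v t * du - u t * dv) / (u t ^ 2 + v t ^ 2)) by (unfold Rdiv; ring).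
    exact H. }
  destruct (Rdichotomy _ _ Hv0) as [Hneg|Hpos].
  + apply (Hshift (- (PI / 2))), (filter_imp (fun s => v s < 0)).
    * intros s Hs. rewrite Carg_Im_neq0 by lra. destruct (Rlt_dec 0 (v s)); [lra | reflexivity].
    * apply (Hcv (fun y => y < 0)), open_lt, Hneg.
  + apply (Hshift (PI / 2)), (filter_imp (fun s => 0 < v s)).
    * intros s Hs. rewrite Carg_Im_neq0 by lra. destruct (Rlt_dec 0 (v s)); [reflexivity | lra].
    * apply (Hcv (fun y => 0 < y)), open_gt, Hpos.
Qed.

Definition outside_cut (w : C) : Prop := ~ (Im w = 0 /\ 1 <= Re w).

(* The segment [1 - x w], x in [0, 1], stays off the cut (-oo, 0] of [Clog]. *)
Lemma outside_cut_segment a b x : outside_cut (a, b) -> 0 <= x <= 1 ->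
  0 < 1 - x * a \/ x * b <> 0.
Proof.
intros Hw Hx. destruct (Req_dec (x * b) 0) as [Hxb|Hxb]; [left | right; exact Hxb].
destruct (Rmult_integral _ _ Hxb) as [-> | ->]; [lra|].
assert (a < 1) by (apply Rnot_le_lt; intros Ha; apply Hw; split; [reflexivity | exact Ha]).
destruct (Rle_lt_dec a 0); nra.
Qed.

Lemma segment_sqnorm_pos a b x : outside_cut (a, b) -> 0 <= x <= 1 ->
  0 < (1 - x * a) ^ 2 + (x * b) ^ 2.
Proof.
intros Hw Hx. assert (H1 := pow2_ge_0 (1 - x * a)). assert (H2 := pow2_ge_0 (x * b)).
destruct (outside_cut_segment a b x Hw Hx) as [H|H].
- assert (0 < (1 - x * a) ^ 2) by (apply pow2_gt_0; lra). lra.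
- assert (0 < (x * b) ^ 2) by (apply pow2_gt_0; exact H). lra.
Qed.

Lemma one_sub_mul_neq0 w x : outside_cut w -> 0 <= x <= 1 -> (1 - x * w)%C <> 0%R.
Proof.
destruct w as [p q]. intros Hw Hx H.
assert (HQ := segment_sqnorm_pos p q x Hw Hx).
apply (f_equal (fun c => Re c ^ 2 + Im c ^ 2)) in H. simpl in H, HQ. nra.
Qed.

Lemma Cinv_one_sub_mul a b (x : R) :
  (/ (1 - x * (a, b)))%C = ((1 - x * a) / ((1 - x * a) ^ 2 + (x * b) ^ 2),
                             x * b / ((1 - x * a) ^ 2 + (x * b) ^ 2)).
Proof.
unfold Cinv, Cminus, Cplus, Copp, Cmult, RtoC; simpl.
f_equal; unfold Rdiv; f_equal; try ring; f_equal; ring.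
Qed.

Lemma div_one_sub_mul a b (x : R) :
  ((a, b) / (1 - x * (a, b)))%C =
  ((a * (1 - x * a) - b * (x * b)) / ((1 - x * a) ^ 2 + (x * b) ^ 2),
   b / ((1 - x * a) ^ 2 + (x * b) ^ 2)).
Proof.
unfold Cdiv. rewrite Cinv_one_sub_mul. unfold Cmult; cbn [fst snd].
f_equal; unfold Rdiv; ring.
Qed.

Lemma is_RInt_ln_abs_one_sub_mul a b : outside_cut (a, b) ->
  is_RInt (fun x => (a * (1 - x * a) - b * (x * b)) / ((1 - x * a) ^ 2 + (x * b) ^ 2)) 0 1
    (- ln (Cmod (1 - (a, b)))).
Proof.
intros Hw. set (Q x := (1 - x * a) ^ 2 + (x * b) ^ 2).
assert (HQ : forall x, Rmin 0 1 <= x <= Rmax 0 1 -> 0 < Q x).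
{ intros x. rewrite Rmin_left, Rmax_right by lra. apply segment_sqnorm_pos, Hw. }
replace (- ln (Cmod (1 - (a, b)))) with (minus (- ln (Q 1) / 2) (- ln (Q 0) / 2)).
2:{ assert (HQ0 : Q 0 = 1) by (unfold Q; ring).
    assert (Hmod : Cmod (1 - (a, b)) = sqrt (Q 1)) by (unfold Cmod, Q; simpl; f_equal; ring).
    rewrite HQ0, ln_1, Hmod, ln_sqrt by (apply HQ; rewrite Rmin_left, Rmax_right; lra).
    unfold minus, plus, opp; simpl. field. }
apply (is_RInt_derive (fun x => - ln (Q x) / 2)).
- intros x Hx. specialize (HQ x Hx). unfold Q in *. auto_derive; [lra | field; lra].
- intros x Hx. specialize (HQ x Hx). unfold Q in *.
  apply (@ex_derive_continuous R_AbsRing R_NormedModule). auto_derive. lra.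
Qed.

Lemma is_RInt_arg_one_sub_mul a b : outside_cut (a, b) ->
  is_RInt (fun x => b / ((1 - x * a) ^ 2 + (x * b) ^ 2)) 0 1 (- Carg (1 - (a, b))).
Proof.
intros Hw.
assert (Hseg : forall x, Rmin 0 1 <= x <= Rmax 0 1 -> 0 <= x <= 1)
  by (intros x; rewrite Rmin_left, Rmax_right by lra; exact (fun H => H)).
replace (- Carg (1 - (a, b)))
  with (minus (- Carg (1 - 1 * a, - (1 * b))) (- Carg (1 - 0 * a, - (0 * b)))).
2:{ replace (1 - 0 * a, - (0 * b)) with (1, 0) by (f_equal; ring).
    replace (1 - 1 * a, - (1 * b)) with (1 - (a, b))%C
      by (unfold Cminus, Cplus, Copp, RtoC; simpl; f_equal; ring).
    rewrite Carg_Re_pos, Rdiv_0_l, atan_0 by lra.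
    unfold minus, plus, opp; simpl. ring. }
apply (is_RInt_derive (fun x => - Carg (1 - x * a, - (x * b)))).
- intros x Hx. specialize (Hseg x Hx).
  assert (HQ := segment_sqnorm_pos a b x Hw Hseg).
  replace (b / ((1 - x * a) ^ 2 + (x * b) ^ 2))
    with (opp (((1 - x * a) * - b - - (x * b) * - a) / ((1 - x * a) ^ 2 + (- (x * b)) ^ 2)))
    by (unfold opp; simpl; field; lra).
  apply (is_derive_opp (fun s => Carg (1 - s * a, - (s * b)))).
  apply (is_derive_Carg (fun s => 1 - s * a) (fun s => - (s * b))).
  + auto_derive; [exact I | ring].
  + auto_derive; [exact I | ring].
  + destruct (outside_cut_segment a b x Hw Hseg); [left | right]; lra.
- intros x Hx. assert (HQ := segment_sqnorm_pos a b x Hw (Hseg x Hx)).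
  apply (@ex_derive_continuous R_AbsRing R_NormedModule). auto_derive. lra.
Qed.

Lemma is_RInt_div_one_sub_mul (w : C) : outside_cut w ->
  is_RInt (fun x : R => w / (1 - x * w))%C 0 1 (- Clog (1 - w))%C.
Proof.
intros Hw. destruct w as [a b]. apply is_RInt_C.
- apply (is_RInt_ext (fun x => (a * (1 - x * a) - b * (x * b)) / ((1 - x * a) ^ 2 + (x * b) ^ 2))).
  + intros x _. rewrite div_one_sub_mul. reflexivity.
  + exact (is_RInt_ln_abs_one_sub_mul a b Hw).
- apply (is_RInt_ext (fun x => b / ((1 - x * a) ^ 2 + (x * b) ^ 2))).
  + intros x _. rewrite div_one_sub_mul. reflexivity.
  + exact (is_RInt_arg_one_sub_mul a b Hw).
Qed.

(** * The functional equation *)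

(* Equal to the integrand of [gammaE] on (0, 1), but continuous on [0, 1]: at 0 the
   junk values turn the integrand of [gammaE] into 0 instead of its limit 1. *)
Definition gamma_integrand (w : C) (x : R) : C := (RtoC (1 - logmean x) / (1 - x * w))%C.

Lemma gammaE_RInt w : gammaE w = @RInt C_R_CompleteNormedModule (gamma_integrand w) 0 1.
Proof.
apply (@RInt_ext C_R_CompleteNormedModule). intros x Hx. rewrite Rmin_left, Rmax_right in Hx by lra.
unfold gamma_integrand, Cdiv. do 2 f_equal.
rewrite logmean_neq1 by lra. assert (ln x < 0) by (apply ln_lt_0; lra). field. lra.
Qed.

Lemma gamma_integrand_components p q x :
  gamma_integrand (p, q) x =
  ((1 - logmean x) * ((1 - x * p) / ((1 - x * p) ^ 2 + (x * q) ^ 2)),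
   (1 - logmean x) * (x * q / ((1 - x * p) ^ 2 + (x * q) ^ 2))).
Proof.
unfold gamma_integrand, Cdiv. rewrite Cinv_one_sub_mul. unfold Cmult, RtoC; cbn [fst snd].
f_equal; ring.
Qed.

Lemma continuous_gamma_integrand w x : outside_cut w -> 0 <= x <= 1 ->
  continuous (gamma_integrand w) x.
Proof.
intros Hw Hx. destruct w as [p q]. assert (HQ := segment_sqnorm_pos p q x Hw Hx).
assert (HL : continuous (fun t => 1 - logmean t) x)
  by exact (continuous_minus _ _ x (continuous_const 1 x) (continuous_logmean x Hx)).
apply continuous_C.
- apply continuous_ext
    with (fun t => (1 - logmean t) * ((1 - t * p) / ((1 - t * p) ^ 2 + (t * q) ^ 2))).
  { intros t. rewrite gamma_integrand_components. reflexivity. }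
  apply (@continuous_mult R_UniformSpace R_AbsRing); [exact HL|].
  apply (@ex_derive_continuous R_AbsRing R_NormedModule). auto_derive. lra.
- apply continuous_ext
    with (fun t => (1 - logmean t) * (t * q / ((1 - t * p) ^ 2 + (t * q) ^ 2))).
  { intros t. rewrite gamma_integrand_components. reflexivity. }
  apply (@continuous_mult R_UniformSpace R_AbsRing); [exact HL|].
  apply (@ex_derive_continuous R_AbsRing R_NormedModule). auto_derive. lra.
Qed.

Lemma is_RInt_gammaE w : outside_cut w -> is_RInt (gamma_integrand w) 0 1 (gammaE w).
Proof.
intros Hw. rewrite gammaE_RInt.
apply (@RInt_correct C_R_CompleteNormedModule), (@ex_RInt_continuous C_R_CompleteNormedModule).
intros x Hx. rewrite Rmin_left, Rmax_right in Hx by lra.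
apply continuous_gamma_integrand; assumption.
Qed.

Lemma is_RInt_gammaE_sq w : outside_cut w ->
  is_RInt (fun y => 2 * y * gamma_integrand w (y * y))%C 0 1 (gammaE w).
Proof.
intros Hw.
assert (Hc := @is_RInt_comp C_R_CompleteNormedModule (gamma_integrand w)
  (fun y => y * y) (fun y => 2 * y) 0 1).
cbv beta in Hc. rewrite Rmult_0_l, Rmult_1_l, <- gammaE_RInt in Hc.
apply (is_RInt_ext (fun y => scal (2 * y) (gamma_integrand w (y * y)))).
{ intros y _. rewrite scal_R_Cmult, RtoC_mult. reflexivity. }
apply Hc.
- intros x Hx. rewrite Rmin_left, Rmax_right in Hx by lra.
  apply continuous_gamma_integrand; [exact Hw | nra].
- intros x _. split.
  + auto_derive; [exact I | ring].
  + apply (@ex_derive_continuous R_AbsRing R_NormedModule). auto_derive. exact I.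
Qed.

Lemma gamma_integrand_identity (z : C) (y : R) : 0 < y < 1 ->
  (1 - y * z)%C <> 0%R -> (1 - y * - z)%C <> 0%R ->
  (z * (1 + z) * gamma_integrand z y + z * (1 - z) * gamma_integrand (- z) y)%C
  = (2 * (z * (z * z)) * (2 * y * gamma_integrand (z * z) (y * y))
     + ((1 - z) * (z / (1 - y * z)) - (1 + z) * (- z / (1 - y * - z))
        - 2 * z * RtoC (logmean y)))%C.
Proof.
intros Hy H1 H2. unfold gamma_integrand. rewrite logmean_sq by exact Hy.
replace (1 - RtoC (y * y) * (z * z))%C with ((1 - y * z) * (1 - y * - z))%C
  by (rewrite RtoC_mult; ring).
assert (H2' : RtoC 2 <> 0%R) by (intros H; apply (f_equal Re) in H; simpl in H; lra).
rewrite !RtoC_minus, RtoC_div, RtoC_mult, RtoC_plus by lra.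
field. auto.
Qed.

Lemma outside_cut_opp_sq z : ~ (Im z = 0 /\ (Re z <= -1 \/ 1 <= Re z)) ->
  outside_cut z /\ outside_cut (- z) /\ outside_cut (z * z).
Proof.
destruct z as [a b]. unfold outside_cut; simpl. intros Hz. repeat split.
- intros [Hb Ha]. apply Hz. split; [exact Hb | right; exact Ha].
- intros [Hb Ha]. apply Hz. split; [lra | left; lra].
- intros [Hab Ha]. apply Hz.
  assert (Hb : b = 0).
  { destruct (Rmult_integral a b ltac:(lra)) as [Ha0 | Hb0]; [subst; nra | exact Hb0]. }
  subst b. split; [reflexivity|]. destruct (Rle_lt_dec a 0); [left | right]; nra.
Qed.

Theorem theorem15 (z : C) :
  ~ (Im z = 0 /\ (Re z <= -1 \/ 1 <= Re z)) ->
  Cplus (Cmult (Cmult z (Cplus (RtoC 1) z)) (gammaE z))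
        (Cmult (Cmult z (Cminus (RtoC 1) z)) (gammaE (Copp z)))
  = Cplus (Cplus (Cminus (Cmult (Cmult (RtoC 2) (Cmult z (Cmult z z))) (gammaE (Cmult z z)))
                         (Cmult (Cmult (RtoC 2) z) (RtoC (ln 2))))
                 (Cmult (Cplus (RtoC 1) z) (Clog (Cplus (RtoC 1) z))))
          (Copp (Cmult (Cminus (RtoC 1) z) (Clog (Cminus (RtoC 1) z)))).
Proof.
intros Hz. destruct (outside_cut_opp_sq z Hz) as (Hp & Hm & Hsq).
assert (Hlhs := is_RInt_Cplus _ _ _ _ _ _
  (is_RInt_Cmult_l (z * (1 + z)) _ _ _ _ (is_RInt_gammaE z Hp))
  (is_RInt_Cmult_l (z * (1 - z)) _ _ _ _ (is_RInt_gammaE (- z) Hm))).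
assert (Hrhs := is_RInt_Cplus _ _ _ _ _ _
  (is_RInt_Cmult_l (2 * (z * (z * z))) _ _ _ _ (is_RInt_gammaE_sq (z * z) Hsq))
  (is_RInt_Cminus _ _ _ _ _ _
    (is_RInt_Cminus _ _ _ _ _ _
      (is_RInt_Cmult_l (1 - z) _ _ _ _ (is_RInt_div_one_sub_mul z Hp))
      (is_RInt_Cmult_l (1 + z) _ _ _ _ (is_RInt_div_one_sub_mul (- z) Hm)))
    (is_RInt_Cmult_l (2 * z) _ _ _ _ (is_RInt_RtoC _ _ _ _ is_RInt_logmean)))).
rewrite (@is_RInt_unique_ext C_R_CompleteNormedModule _ _ _ _ _ _ Hlhs Hrhs).
- replace (1 - - z)%C with (1 + z)%C by ring. ring.
- intros y Hy. rewrite Rmin_left, Rmax_right in Hy by lra.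
  apply gamma_integrand_identity; [exact Hy | |]; apply one_sub_mul_neq0; auto; lra.
Qed.
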